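(* If $Q$ is a saturated cover on a finite modular lattice $M$, then $\langle Q\rangle$ is a saturated transfer system on $M$.
   Context: A lattice $M$ is modular if $a\le b$ implies $a\vee(x\wedge b)=(a\vee x)\wedge b$. A transfer system on a finite lattice $(P,\le)$ is a partial order $R$ refining $\le$ closed under restriction: $x\,R\,z$ and $y\le z$ imply $(x\wedge y)\,R\,y$; it is saturated if $x\,R\,y$, $y\le z$ and $x\,R\,z$ imply $y\,R\,z$. For a set $Q$ of pairs $(x,y)$ with $x\le y$, $\langle Q\rangle$ is the intersection of all transfer systems containing $Q$. A covering diamond is a quadruple $x,y,x\wedge y,x\vee y$ with $x\ne y$ such that $x\vee y$ covers $x$ and $y$ and both cover $x\wedge y$. A saturated cover on $M$ is a set $Q$ of covering relations of $M$ such that (1) for all $x,y$, if $x\,Q\,(x\vee y)$ then $(x\wedge y)\,Q\,y$; (2) for every covering diamond, if three of its four covering relations lie in $Q$, so does the fourth. *)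

From HB Require Import structures.
From mathcomp Require Import all_boot all_order.
Set Implicit Arguments. Unset Strict Implicit. Unset Printing Implicit Defensive.
Import Order.Theory.
Local Open Scope order_scope.

Definition prel (T : Type) := T -> T -> Prop.

Section Transfer.
Context {d : Order.disp_t} {M : latticeType d}.

Definition modular_lattice : Prop :=
  forall a b x : M, a <= b -> a `|` (x `&` b) = (a `|` x) `&` b.

Definition covers (x y : M) : Prop :=
  x < y /\ ~ (exists z : M, x < z /\ z < y).

Definition transfer_system (R : prel M) : Prop :=
  [/\ (forall x, R x x),
      (forall x y, R x y -> R y x -> x = y),
      (forall x y z, R x y -> R y z -> R x z),
      (forall x y, R x y -> x <= y) &
      (forall x y z, R x z -> y <= z -> R (x `&` y) y)].

Definition saturated (R : prel M) : Prop :=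
  forall x y z, R x y -> y <= z -> R x z -> R y z.

Definition generated (Q : prel M) : prel M :=
  fun x y => forall R : prel M, transfer_system R ->
    (forall a b, Q a b -> R a b) -> R x y.

Definition covering_diamond (x y : M) : Prop :=
  [/\ x <> y, covers x (x `|` y), covers y (x `|` y),
      covers (x `&` y) x & covers (x `&` y) y].

Definition saturated_cover (Q : prel M) : Prop :=
  [/\ (forall a b, Q a b -> covers a b),
      (forall x y, Q x (x `|` y) -> Q (x `&` y) y) &
      (forall x y, covering_diamond x y ->
         let r1 := Q (x `&` y) x in let r2 := Q (x `&` y) y in
         let r3 := Q x (x `|` y) in let r4 := Q y (x `|` y) in
         [/\ r1 -> r2 -> r3 -> r4, r1 -> r2 -> r4 -> r3,
             r1 -> r3 -> r4 -> r2 & r2 -> r3 -> r4 -> r1])].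
End Transfer.

(* <Q> is just the reflexive-transitive closure Q* of Q.  Indeed Q* is
   closed under restriction: restricting one cover x Q b along y either
   collapses it (x /\ y = b /\ y) or, as b covers x, gives x \/ (b /\ y) = b,
   and condition (1) yields (x /\ y) Q (b /\ y).  For saturation it suffices
   to push a step x Q a along a path x Q b Q* z with a <= z.  By modularity the
   distinct covers a, b of x span a covering diamond; b Q (a \/ b) since it is a
   cover obtained by restricting b Q* z, so condition (2) gives a Q (a \/ b),
   and we conclude by induction on the path. *)
From Stdlib Require Import Relation_Operators.
From mathcomp Require Import all_boot all_order.
Import Order.Theory.
Set Implicit Arguments. Unset Strict Implicit.

#[local] Arguments rt1n_refl {A R x}.
#[local] Arguments rt1n_trans {A R x y z}.

Local Open Scope order_scope.

Section Covers.
Context {d : Order.disp_t} {M : latticeType d}.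
Implicit Types a b x y t : M.

Lemma covers_lt x y : covers x y -> x < y.
Proof. by case. Qed.

Lemma covers_between x y t : covers x y -> x <= t -> t <= y -> t = x \/ t = y.
Proof.
case=> _ no_mid xt ty; case: (eqVneq t x) => [->|tx]; first by left.
case: (eqVneq t y) => [->|ty']; first by right.
by exfalso; apply: no_mid; exists t; rewrite !lt_neqAle (eq_sym x) tx ty' xt ty.
Qed.

Lemma covers_meet x a b : covers x a -> covers x b -> a <> b -> a `&` b = x.
Proof.
move=> xa xb ab; have [xa' xb'] := (ltW (covers_lt xa), ltW (covers_lt xb)).
have x_le : x <= a `&` b by rewrite lexI xa' xb'.
have [//|eq_a] := covers_between xa x_le (leIl a b).
have le_ab : a <= b by rewrite -eq_a leIr.
have [eq_x|//] := covers_between xb xa' le_ab.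
by move: (covers_lt xa); rewrite eq_x ltxx.
Qed.

Lemma covers_join x a b : modular_lattice (M := M) ->
  covers x a -> covers x b -> a <> b -> covers a (a `|` b).
Proof.
move=> modM xa xb ab; have [xa' xb'] := (ltW (covers_lt xa), ltW (covers_lt xb)).
split.
  rewrite lt_neqAle leUl andbT; apply: contra_notN ab => /eqP eq_j.
  have b_le_a : b <= a by rewrite eq_j leUr.
  have [eq_x|//] := covers_between xa xb' b_le_a.
  by move: (covers_lt xb); rewrite eq_x ltxx.
case=> t [a_lt_t tj].
have x_le : x <= b `&` t by rewrite lexI xb' (le_trans xa' (ltW a_lt_t)).
have [eq_x|eq_b] := covers_between xb x_le (leIl b t).
- (* modularity: t = (a \/ b) /\ t = a \/ (b /\ t) = a \/ x = a *)
  move: (modM a t b (ltW a_lt_t)); rewrite eq_x (join_l xa') (meet_r (ltW tj)).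
  by move=> eq_t; move: a_lt_t; rewrite eq_t ltxx.
- have : a `|` b <= t by rewrite leUx (ltW a_lt_t) -eq_b leIr.
  by move/(lt_le_trans tj); rewrite ltxx.
Qed.

Lemma distinct_covers_diamond x a b : modular_lattice (M := M) ->
  covers x a -> covers x b -> a <> b -> covering_diamond a b.
Proof.
move=> modM xa xb ab; split=> //.
- exact: covers_join xa xb ab.
- by rewrite joinC; apply: covers_join xb xa (nesym ab).
- by rewrite (covers_meet xa xb ab).
- by rewrite (covers_meet xa xb ab).
Qed.

End Covers.

Section TransportIff.
Context {d : Order.disp_t} {M : latticeType d} (R S : prel M).
Hypothesis RS : forall x y, R x y <-> S x y.

Lemma transfer_system_iff : transfer_system R -> transfer_system S.
Proof.
case=> refl anti trans le restr; split.
- by move=> x; apply/RS.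
- by move=> x y /RS xy /RS; apply: anti.
- by move=> x y z /RS xy /RS yz; apply/RS; apply: trans yz.
- by move=> x y /RS; apply: le.
- by move=> x y z /RS xz yz; apply/RS; apply: restr yz.
Qed.

Lemma saturated_iff : saturated R -> saturated S.
Proof. by move=> sat x y z /RS xy yz /RS xz; apply/RS; apply: sat yz xz. Qed.

End TransportIff.

Section Closure.
Context {d : Order.disp_t} {M : latticeType d} (Q : prel M).
Hypothesis Q_covers : forall a b, Q a b -> covers a b.

Local Notation Qstar := (clos_refl_trans_1n M Q).

Lemma Qstar_cat x y z : Qstar x y -> Qstar y z -> Qstar x z.
Proof. by elim=> // a b c ab _ IH cz; apply: rt1n_trans ab (IH cz). Qed.

Lemma Qstar_le x y : Qstar x y -> x <= y.
Proof.
elim=> // a b c ab _; apply: le_trans; exact: ltW (covers_lt (Q_covers ab)).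
Qed.

Lemma Qstar_covers x y : Qstar x y -> covers x y -> Q x y.
Proof.
case=> [|b z xb bz] xz; first by case: xz; rewrite ltxx.
have [eq_x|<-//] := covers_between xz (ltW (covers_lt (Q_covers xb))) (Qstar_le bz).
by move: (covers_lt (Q_covers xb)); rewrite eq_x ltxx.
Qed.

Lemma generated_Qstar x y : Qstar x y -> generated Q x y.
Proof.
move=> xy R [refl _ trans _ _] QR.
by elim: xy => // a b c /QR ab _; apply: trans ab.
Qed.

Hypothesis Q_restrict : forall x y, Q x (x `|` y) -> Q (x `&` y) y.

Lemma Qstar_restrict_step a b y : Q a b -> Qstar (a `&` y) (b `&` y).
Proof.
move=> ab; have a_le_b := ltW (covers_lt (Q_covers ab)).
set w := b `&` y.
have le_aw : a `&` y <= w by rewrite lexI leIr andbT (le_trans (leIl _ _) a_le_b).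
have [w_le_a|w_nle_a] := boolP (w <= a).
  suff -> : a `&` y = w by apply: rt1n_refl.
  by apply: le_anti; rewrite le_aw lexI w_le_a leIr.
have aw_le_b : a `|` w <= b by rewrite leUx a_le_b leIl.
have [eq_a|eq_b] := covers_between (Q_covers ab) (leUl a w) aw_le_b.
  by move: w_nle_a; rewrite -eq_a leUr.
suff -> : a `&` y = a `&` w by apply: rt1n_trans rt1n_refl; apply: Q_restrict; rewrite eq_b.
by rewrite /w meetA (meet_l a_le_b).
Qed.

Lemma Qstar_restrict x y z : Qstar x z -> y <= z -> Qstar (x `&` y) y.
Proof.
move=> xz; elim: xz y => [a y ya | a b c ab _ IH y yc].
  by rewrite meet_r //; apply: rt1n_refl.
by apply: Qstar_cat (IH y yc); apply: Qstar_restrict_step.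
Qed.

Lemma Qstar_transfer_system : transfer_system Qstar.
Proof.
split.
- by move=> x; apply: rt1n_refl.
- by move=> x y xy yx; apply: le_anti; rewrite (Qstar_le xy) (Qstar_le yx).
- exact: Qstar_cat.
- exact: Qstar_le.
- exact: Qstar_restrict.
Qed.

Lemma generatedE x y : generated Q x y <-> Qstar x y.
Proof.
split; last exact: generated_Qstar.
by apply; [apply: Qstar_transfer_system | move=> a b ab; apply: rt1n_trans ab rt1n_refl].
Qed.

Hypothesis modM : modular_lattice (M := M).
Hypothesis Q_diamond : forall x y, covering_diamond x y ->
  Q (x `&` y) x -> Q (x `&` y) y -> Q y (x `|` y) -> Q x (x `|` y).

Lemma Qstar_push x z : Qstar x z -> forall a, Q x a -> a <= z -> Qstar a z.
Proof.
elim=> [y a ya az | y b c yb bc IH a ya ac].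
  by move: (le_lt_trans az (covers_lt (Q_covers ya))); rewrite ltxx.
have [->//|ab] := eqVneq a b.
have ab' : a <> b by apply/eqP.
have [meet_ab yab] := (covers_meet (Q_covers ya) (Q_covers yb) ab',
                       distinct_covers_diamond modM (Q_covers ya) (Q_covers yb) ab').
have join_le_c : a `|` b <= c by rewrite leUx ac (Qstar_le bc).
have b_join : Q b (a `|` b).
  apply: Qstar_covers; last by case: yab.
  by move: (Qstar_restrict bc join_le_c); rewrite meet_l // leUr.
apply: rt1n_trans (IH _ b_join join_le_c).
by apply: Q_diamond; rewrite ?meet_ab.
Qed.

Lemma Qstar_saturated : saturated Qstar.
Proof.
move=> x y z xy; elim: xy z => // a b c ab bc IH z cz az.
exact: IH cz (Qstar_push az ab (le_trans (Qstar_le bc) cz)).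
Qed.

End Closure.

Theorem proposition3p11 (d : Order.disp_t) (M : finLatticeType d)
  (Q : M -> M -> Prop) :
  modular_lattice (M := M) -> saturated_cover Q ->
  transfer_system (generated Q) /\ saturated (generated Q).
Proof.
move=> modM [Q_covers Q_restrict Q_diamond].
have genE x y := iff_sym (generatedE Q_covers Q_restrict x y).
split; first exact: transfer_system_iff genE (Qstar_transfer_system _ _).
apply: saturated_iff genE (Qstar_saturated Q_covers Q_restrict modM _).
by move=> x y /Q_diamond[].
Qed.
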